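(* Let $Z$ be a real Banach space and $f:Z\to\mathbb{R}$ a continuous convex function. For $z\in Z$ and $\xi\in\partial f(z)$ define $$Y(f,z,\xi)=\{v\in Z: f(z+tv)-f(z)-\langle\xi,tv\rangle=0 \text{ for all } t\in\mathbb{R}\}.$$ Then for all $z_1,z_2\in Z$, $\xi_1\in\partial f(z_1)$, $\xi_2\in\partial f(z_2)$: (1) $Y(f,z_1,\xi_1)$ is a closed linear subspace of $Z$; (2) $Y(f,z_1,\xi_1)=Y(f,z_2,\xi_2)$; (3) $f(z_1+v)=f(z_1)+\langle\xi_1,v\rangle$ for all $v\in Y(f,z_1,\xi_1)$; (4) $\langle\xi_2-\xi_1,v\rangle=0$ for all $v\in Y(f,z_1,\xi_1)$.
   Context: $\partial f(x)=\{\xi\in Z^*: f(y)\ge f(x)+\langle\xi,y-x\rangle \text{ for all } y\in Z\}$. *)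

From Stdlib Require Import Reals.
Open Scope R_scope.

Record BanachSpace := {
  carrier :> Type;
  vzero : carrier;
  vadd : carrier -> carrier -> carrier;
  vopp : carrier -> carrier;
  vscal : R -> carrier -> carrier;
  vnorm : carrier -> R;
  vadd_assoc : forall x y z, vadd x (vadd y z) = vadd (vadd x y) z;
  vadd_comm : forall x y, vadd x y = vadd y x;
  vadd_0 : forall x, vadd x vzero = x;
  vadd_opp : forall x, vadd x (vopp x) = vzero;
  vscal_1 : forall x, vscal 1 x = x;
  vscal_assoc : forall a b x, vscal a (vscal b x) = vscal (a * b) x;
  vscal_distr_v : forall a x y, vscal a (vadd x y) = vadd (vscal a x) (vscal a y);
  vscal_distr_s : forall a b x, vscal (a + b) x = vadd (vscal a x) (vscal b x);
  vnorm_ge0 : forall x, 0 <= vnorm x;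
  vnorm_eq0 : forall x, vnorm x = 0 -> x = vzero;
  vnorm_scal : forall a x, vnorm (vscal a x) = Rabs a * vnorm x;
  vnorm_triangle : forall x y, vnorm (vadd x y) <= vnorm x + vnorm y;
  vcomplete : forall u : nat -> carrier,
    (forall eps, 0 < eps -> exists N, forall m n, (N <= m)%nat -> (N <= n)%nat ->
        vnorm (vadd (u m) (vopp (u n))) < eps) ->
    exists l, forall eps, 0 < eps -> exists N, forall n, (N <= n)%nat ->
        vnorm (vadd (u n) (vopp l)) < eps
}.

Arguments vzero {b} : rename.
Arguments vadd {b} _ _ : rename.
Arguments vopp {b} _ : rename.
Arguments vscal {b} _ _ : rename.
Arguments vnorm {b} _ : rename.

Section Defs.
Variable Z : BanachSpace.

Definition vsub (x y : Z) : Z := vadd x (vopp y).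

Definition vconverges (u : nat -> Z) (l : Z) : Prop :=
  forall eps, 0 < eps -> exists N, forall n, (N <= n)%nat -> vnorm (vsub (u n) l) < eps.

Definition continuous_fun (f : Z -> R) : Prop :=
  forall x eps, 0 < eps -> exists delta, 0 < delta /\
    forall y, vnorm (vsub y x) < delta -> Rabs (f y - f x) < eps.

Definition convex_fun (f : Z -> R) : Prop :=
  forall x y t, 0 <= t <= 1 ->
    f (vadd (vscal t x) (vscal (1 - t) y)) <= t * f x + (1 - t) * f y.

Definition in_dual (xi : Z -> R) : Prop :=
  (forall x y, xi (vadd x y) = xi x + xi y) /\
  (forall a x, xi (vscal a x) = a * xi x) /\
  (exists C, forall x, Rabs (xi x) <= C * vnorm x).

Definition subdiff (f : Z -> R) (x : Z) (xi : Z -> R) : Prop :=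
  in_dual xi /\ forall y, f y >= f x + xi (vsub y x).

Definition Yset (f : Z -> R) (z : Z) (xi : Z -> R) (v : Z) : Prop :=
  forall t : R, f (vadd z (vscal t v)) - f z - xi (vscal t v) = 0.

Definition linear_subspace (S : Z -> Prop) : Prop :=
  S vzero /\ (forall x y, S x -> S y -> S (vadd x y)) /\
  (forall a x, S x -> S (vscal a x)).

Definition vclosed_set (S : Z -> Prop) : Prop :=
  forall (u : nat -> Z) l, (forall n, S (u n)) -> vconverges u l -> S l.

End Defs.

Arguments vsub {Z} _ _.
Arguments vconverges {Z} _ _.

From Stdlib Require Import Reals Lra.
Open Scope R_scope.

(* The key fact is a rigidity property of continuous convex functions: if [f] is
   majorized along one line [z + R v] by an affine function of slope [a], then it is
   along every parallel line [w + R v].  Indeed [w + t v] is a convex combination, with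
   weight [lam], of the far point [z + (t / lam) v] and of a point close to [w]; letting
   [lam -> 0] yields [f (w + t v) <= f w + t a].
   For a subgradient [xi] at [z], the subgradient inequality gives the reverse bound, so
   [Y f z xi] is exactly the set of directions along which [f z + t <xi, v>] majorizes
   [f].  Hence [v] in [Y f z1 xi1] forces [<xi2, v> = <xi1, v>] (compare [t = 1] and
   [t = -1] at [z2]) and [v] in [Y f z2 xi2]; additivity of [Y] follows by translating
   the majorant for [v] to the line through [z + t w], and closedness because [Y] is an
   intersection of level sets of continuous functions. *)

Section VectorAlgebra.
Variable Z : BanachSpace.
Implicit Types (x y z w v : Z) (a : R).

Lemma vadd_0_l x : vadd vzero x = x.
Proof. rewrite vadd_comm; apply vadd_0. Qed.

Lemma vadd_opp_K x y : vadd (vopp x) (vadd x y) = y.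
Proof. rewrite vadd_assoc, (vadd_comm _ (vopp x) x), vadd_opp; apply vadd_0_l. Qed.

Lemma vadd_cancel_l x y z : vadd x y = vadd x z -> y = z.
Proof. intro H. rewrite <- (vadd_opp_K x y), <- (vadd_opp_K x z), H; reflexivity. Qed.

Lemma vopp_unique x y : vadd x y = vzero -> y = vopp x.
Proof. intro H. rewrite <- (vadd_opp_K x y), H; apply vadd_0. Qed.

Lemma vscal_0_l x : vscal 0 x = vzero.
Proof.
  apply (vadd_cancel_l (vscal 0 x)).
  rewrite <- vscal_distr_s, Rplus_0_r, vadd_0; reflexivity.
Qed.

Lemma vscal_0_r a : vscal a (@vzero Z) = vzero.
Proof. rewrite <- (vscal_0_l vzero), vscal_assoc, Rmult_0_r; reflexivity. Qed.

Lemma vscal_m1_l x : vscal (-1) x = vopp x.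
Proof.
  apply vopp_unique. rewrite <- (vscal_1 _ x) at 1.
  rewrite <- vscal_distr_s, Rplus_opp_r; apply vscal_0_l.
Qed.

Lemma vscal_opp a x : vscal a (vopp x) = vopp (vscal a x).
Proof. apply vopp_unique. rewrite <- vscal_distr_v, vadd_opp; apply vscal_0_r. Qed.

Lemma vadd_add_swap x y z w : vadd (vadd x y) (vadd z w) = vadd (vadd x z) (vadd y w).
Proof.
  rewrite <- !vadd_assoc. f_equal. rewrite !vadd_assoc. f_equal. apply vadd_comm.
Qed.

Lemma vsub_add_l w x : vsub (vadd w x) w = x.
Proof. unfold vsub. rewrite vadd_comm; apply vadd_opp_K. Qed.

Lemma vsub_add_add_l z x y : vsub (vadd z x) (vadd z y) = vsub x y.
Proof.
  unfold vsub. rewrite <- !vscal_m1_l, vscal_distr_v, !vscal_m1_l, vadd_add_swap, vadd_opp.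
  apply vadd_0_l.
Qed.

Lemma vsub_scal a x y : vsub (vscal a x) (vscal a y) = vscal a (vsub x y).
Proof. unfold vsub. rewrite vscal_distr_v, vscal_opp; reflexivity. Qed.

Lemma vadd_scal_vadd z a v w : vadd z (vscal a (vadd v w)) = vadd (vadd z (vscal a w)) (vscal a v).
Proof. rewrite vscal_distr_v, (vadd_comm _ (vscal a v)), vadd_assoc; reflexivity. Qed.

Lemma vconvex_comb_lines z w v lam c s t :
  lam * s = t -> (1 - lam) * c = lam ->
  vadd (vscal lam (vadd z (vscal s v))) (vscal (1 - lam) (vadd w (vscal c (vsub w z))))
  = vadd w (vscal t v).
Proof.
  intros Hs Hc. unfold vsub.
  rewrite !vscal_distr_v, !vscal_assoc, vscal_opp, Hs, Hc, (vadd_assoc _ (vscal (1 - lam) w)),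
    <- vscal_distr_s, Rplus_comm, Rplus_minus, vscal_1,
    (vadd_comm _ (vadd (vscal lam z) _)), <- vadd_assoc, vadd_opp_K.
  reflexivity.
Qed.

End VectorAlgebra.

Lemma exists_small_pos (A delta : R) :
  0 <= A -> 0 < delta -> exists c, 0 < c /\ c * A < delta.
Proof.
  intros HA Hd. exists (delta / (A + 1)).
  assert (Hc : delta / (A + 1) * (A + 1) = delta) by (field; lra).
  assert (0 < delta / (A + 1)) by (apply Rdiv_lt_0_compat; lra).
  split; nra.
Qed.

Section Continuity.
Variable Z : BanachSpace.

Lemma in_dual_vzero (xi : Z -> R) : in_dual Z xi -> xi vzero = 0.
Proof. intros [_ [Hscal _]]. rewrite <- (vscal_0_l Z vzero), Hscal; ring. Qed.

Lemma in_dual_vsub (xi : Z -> R) x y : in_dual Z xi -> xi (vsub x y) = xi x - xi y.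
Proof.
  intros [Hadd [Hscal _]]. unfold vsub.
  rewrite Hadd, <- vscal_m1_l, Hscal; ring.
Qed.

Lemma in_dual_continuous (xi : Z -> R) : in_dual Z xi -> continuous_fun Z xi.
Proof.
  intros Hxi x eps Heps. pose proof Hxi as [_ [_ [C HC]]].
  destruct (exists_small_pos (Rabs C) eps) as [delta [Hdelta Hsmall]];
    [apply Rabs_pos | exact Heps |].
  exists delta. split; [exact Hdelta|]. intros y Hy.
  rewrite <- in_dual_vsub by exact Hxi.
  pose proof (vnorm_ge0 _ (vsub y x)). pose proof (Rle_abs C). pose proof (Rabs_pos C).
  specialize (HC (vsub y x)). nra.
Qed.

Lemma continuous_fun_comp_affine (f : Z -> R) z t :
  continuous_fun Z f -> continuous_fun Z (fun v => f (vadd z (vscal t v))).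
Proof.
  intros Hf x eps Heps.
  destruct (Hf (vadd z (vscal t x)) eps Heps) as [delta [Hdelta Hclose]].
  destruct (exists_small_pos (Rabs t) delta) as [c [Hc Hsmall]];
    [apply Rabs_pos | exact Hdelta |].
  exists c. split; [exact Hc|]. intros y Hy. apply Hclose.
  rewrite vsub_add_add_l, vsub_scal, vnorm_scal.
  pose proof (vnorm_ge0 _ (vsub y x)). pose proof (Rabs_pos t). nra.
Qed.

Lemma continuous_fun_minus (f g : Z -> R) :
  continuous_fun Z f -> continuous_fun Z g -> continuous_fun Z (fun v => f v - g v).
Proof.
  intros Hf Hg x eps Heps.
  destruct (Hf x (eps / 2)) as [d1 [Hd1 H1]]; [lra|].
  destruct (Hg x (eps / 2)) as [d2 [Hd2 H2]]; [lra|].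
  exists (Rmin d1 d2). split; [apply Rmin_glb_lt; assumption|]. intros y Hy.
  specialize (H1 y (Rlt_le_trans _ _ _ Hy (Rmin_l d1 d2))).
  specialize (H2 y (Rlt_le_trans _ _ _ Hy (Rmin_r d1 d2))).
  apply Rabs_def1; apply Rabs_def2 in H1; apply Rabs_def2 in H2; lra.
Qed.

Lemma continuous_fun_scal (c : R) (g : Z -> R) :
  continuous_fun Z g -> continuous_fun Z (fun v => c * g v).
Proof.
  intros Hg x eps Heps.
  destruct (exists_small_pos (Rabs c) eps) as [e [He Hsmall]]; [apply Rabs_pos | exact Heps |].
  destruct (Hg x e He) as [delta [Hdelta Hclose]].
  exists delta. split; [exact Hdelta|]. intros y Hy.
  rewrite <- Rmult_minus_distr_l, Rabs_mult.
  pose proof (Hclose y Hy). pose proof (Rabs_pos c). pose proof (Rabs_pos (g y - g x)). nra.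
Qed.

Lemma vclosed_set_level (g : Z -> R) (c : R) :
  continuous_fun Z g -> vclosed_set Z (fun v => g v = c).
Proof.
  intros Hg u l Hu Hul.
  destruct (Req_dec (g l) c) as [Heq|Hne]; [exact Heq|exfalso].
  assert (Hgap : 0 < Rabs (g l - c)) by (apply Rabs_pos_lt; lra).
  destruct (Hg l _ Hgap) as [delta [Hdelta Hclose]].
  destruct (Hul delta Hdelta) as [N HN].
  specialize (Hclose (u N) (HN N (le_n N))). rewrite Hu, Rabs_minus_sym in Hclose. lra.
Qed.

End Continuity.

Section AffineMajorant.
Variable Z : BanachSpace.
Variable f : Z -> R.
Hypothesis hcont : continuous_fun Z f.
Hypothesis hconv : convex_fun Z f.

Variables (z v : Z) (a : R).
Hypothesis hmaj : forall s, f (vadd z (vscal s v)) <= f z + s * a.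

Lemma line_majorant_convex_step w t c : 0 < c ->
  f (vadd w (vscal t v))
  <= c / (1 + c) * f z + t * a + (1 - c / (1 + c)) * f (vadd w (vscal c (vsub w z))).
Proof.
  intro Hc. set (lam := c / (1 + c)). set (s := t / lam).
  assert (Hlam : 0 < lam < 1).
  { unfold lam. split; [apply Rdiv_lt_0_compat; lra|].
    apply (Rmult_lt_reg_r (1 + c)); [lra|]. unfold Rdiv. rewrite Rmult_assoc, Rinv_l; lra. }
  rewrite <- (vconvex_comb_lines Z z w v lam c s t) by (unfold s, lam; field; lra).
  eapply Rle_trans; [apply hconv; lra|].
  specialize (hmaj s).
  assert (Hts : lam * (f z + s * a) = lam * f z + t * a) by (unfold s; field; lra).
  pose proof (Rmult_le_compat_l lam _ _ (Rlt_le _ _ (proj1 Hlam)) hmaj). lra.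
Qed.

(* Let [c -> 0] in the previous inequality: the [z]-term vanishes and continuity at [w]
   brings [f (w + c (w - z))] back to [f w]. *)
Lemma line_majorant_translate w t : f (vadd w (vscal t v)) <= f w + t * a.
Proof.
  apply Rle_plus_epsilon. intros eps Heps.
  destruct (hcont w (eps / 2)) as [delta [Hdelta Hclose]]; [lra|].
  set (M := Rabs (f z) + Rabs (f w) + eps / 2).
  assert (HM : 0 <= M) by (unfold M; pose proof (Rabs_pos (f z)); pose proof (Rabs_pos (f w)); lra).
  pose proof (vnorm_ge0 _ (vsub w z)) as Hd.
  destruct (exists_small_pos (vnorm (vsub w z) + M) (Rmin delta (eps / 2)))
    as [c [Hc Hsmall]]; [lra | apply Rmin_glb_lt; lra |].
  pose proof (Rmin_l delta (eps / 2)). pose proof (Rmin_r delta (eps / 2)).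
  set (y := vadd w (vscal c (vsub w z))).
  assert (Hy : Rabs (f y - f w) < eps / 2).
  { apply Hclose. unfold y. rewrite vsub_add_l, vnorm_scal, Rabs_pos_eq by lra. nra. }
  pose proof (line_majorant_convex_step w t c Hc) as Hstep. fold y in Hstep.
  set (lam := c / (1 + c)) in Hstep.
  assert (Hlam : 0 <= lam <= c).
  { unfold lam. split; [left; apply Rdiv_lt_0_compat; lra|].
    apply (Rmult_le_reg_r (1 + c)); [lra|]. unfold Rdiv. rewrite Rmult_assoc, Rinv_l; nra. }
  apply Rabs_def2 in Hy.
  assert (Hzy : f z - f y <= M)
    by (unfold M; pose proof (Rle_abs (f z)); pose proof (Rle_abs (- f w)); rewrite Rabs_Ropp in *; lra).
  assert (lam * (f z - f y) <= c * M) by nra.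
  nra.
Qed.

End AffineMajorant.

Section Yset.
Variable Z : BanachSpace.
Variable f : Z -> R.
Hypothesis hcont : continuous_fun Z f.
Hypothesis hconv : convex_fun Z f.

Lemma Yset_iff_line_le z xi v : subdiff Z f z xi ->
  Yset Z f z xi v <-> forall t, f (vadd z (vscal t v)) <= f z + t * xi v.
Proof.
  intros [[_ [Hscal _]] Hsub]. unfold Yset.
  split; intros H t; specialize (H t); rewrite Hscal in *; [lra|].
  specialize (Hsub (vadd z (vscal t v))). rewrite vsub_add_l, Hscal in Hsub. lra.
Qed.

Lemma Yset_line_le z xi v : subdiff Z f z xi -> Yset Z f z xi v ->
  forall w t, f (vadd w (vscal t v)) <= f w + t * xi v.
Proof.
  intros Hz HY. apply line_majorant_translate with z; try assumption.
  exact (proj1 (Yset_iff_line_le z xi v Hz) HY).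
Qed.

Lemma subdiff_eq_on_Yset z1 z2 xi1 xi2 v :
  subdiff Z f z1 xi1 -> subdiff Z f z2 xi2 -> Yset Z f z1 xi1 v -> xi2 v = xi1 v.
Proof.
  intros H1 [[_ [Hscal _]] Hsub] HY.
  pose proof (Yset_line_le z1 xi1 v H1 HY z2) as Hle.
  assert (Hge : forall t, f (vadd z2 (vscal t v)) >= f z2 + t * xi2 v).
  { intro t. specialize (Hsub (vadd z2 (vscal t v))). rewrite vsub_add_l, Hscal in Hsub. exact Hsub. }
  pose proof (Hle 1). pose proof (Hle (-1)). pose proof (Hge 1). pose proof (Hge (-1)). lra.
Qed.

Lemma Yset_transfer z1 z2 xi1 xi2 v :
  subdiff Z f z1 xi1 -> subdiff Z f z2 xi2 -> Yset Z f z1 xi1 v -> Yset Z f z2 xi2 v.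
Proof.
  intros H1 H2 HY. apply (Yset_iff_line_le z2 xi2 v H2). intro t.
  rewrite (subdiff_eq_on_Yset z1 z2 xi1 xi2 v H1 H2 HY).
  apply (Yset_line_le z1 xi1 v H1 HY).
Qed.

Lemma Yset_linear_subspace z xi : subdiff Z f z xi -> linear_subspace Z (Yset Z f z xi).
Proof.
  intro Hz. pose proof Hz as [Hxi _]. pose proof Hxi as [Hadd _].
  split; [|split].
  - intro t. rewrite vscal_0_r, vadd_0, in_dual_vzero by exact Hxi. ring.
  - intros v w Hv Hw. apply (Yset_iff_line_le z xi _ Hz). intro t.
    rewrite vadd_scal_vadd, Hadd.
    pose proof (Yset_line_le z xi v Hz Hv (vadd z (vscal t w)) t).
    pose proof (proj1 (Yset_iff_line_le z xi w Hz) Hw t). lra.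
  - intros c v Hv t. rewrite vscal_assoc. apply Hv.
Qed.

Lemma Yset_closed z xi : subdiff Z f z xi -> vclosed_set Z (Yset Z f z xi).
Proof.
  intros [Hxi _] u l Hu Hul t. pose proof Hxi as [_ [Hscal _]].
  rewrite Hscal.
  set (g := fun v => f (vadd z (vscal t v)) - t * xi v).
  assert (Hg : continuous_fun Z g).
  { apply continuous_fun_minus; [apply continuous_fun_comp_affine, hcont|].
    apply continuous_fun_scal, in_dual_continuous, Hxi. }
  enough (g l = f z) by (unfold g in *; lra).
  apply (vclosed_set_level Z g (f z) Hg u l); [|exact Hul].
  intro n. specialize (Hu n t). rewrite Hscal in Hu. unfold g. lra.
Qed.

End Yset.

Theorem mainTheorem4 (Z : BanachSpace) (f : Z -> R)
  (hcont : continuous_fun Z f) (hconv : convex_fun Z f) :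
  forall (z1 z2 : Z) (xi1 xi2 : Z -> R),
    subdiff Z f z1 xi1 -> subdiff Z f z2 xi2 ->
    (linear_subspace Z (Yset Z f z1 xi1) /\ vclosed_set Z (Yset Z f z1 xi1)) /\
    (forall v, Yset Z f z1 xi1 v <-> Yset Z f z2 xi2 v) /\
    (forall v, Yset Z f z1 xi1 v -> f (vadd z1 v) = f z1 + xi1 v) /\
    (forall v, Yset Z f z1 xi1 v -> xi2 v - xi1 v = 0).
Proof.
  intros z1 z2 xi1 xi2 H1 H2.
  split; [split|split; [|split]].
  - exact (Yset_linear_subspace Z f hcont hconv z1 xi1 H1).
  - exact (Yset_closed Z f hcont z1 xi1 H1).
  - intro v. split; apply Yset_transfer; assumption.
  - intros v HY. specialize (HY 1). rewrite vscal_1 in HY. lra.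
  - intros v HY. rewrite (subdiff_eq_on_Yset Z f hcont hconv z1 z2 xi1 xi2 v H1 H2 HY). ring.
Qed.
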